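(* Let $(R,\mathfrak m,k)$ be a Noetherian local ring of prime characteristic $p$ satisfying $$(0:\mathfrak m^p)_R:=\{x\in R \mid \mathfrak m^p x=0\}\not\subseteq \mathfrak m^p .$$ If $M$ is a finitely generated $R$-module such that $\operatorname{Tor}^R_j(M,{}^{\phi^r}\!R)=0$ for some integers $j\ge 1$ and $r\ge 1$, then $M$ is a projective (equivalently, free) $R$-module.
   Context: $\phi:R\to R$ denotes the Frobenius homomorphism $\phi(a)=a^p$. For $r\ge 1$, ${}^{\phi^r}\!R$ denotes the ring $R$ regarded as an $R$-module via $\phi^r$, i.e. $a\cdot b=a^{p^r}b$ for $a\in R$, $b\in {}^{\phi^r}\!R$. *)

From HB Require Import structures.
From mathcomp Require Import all_boot all_order all_algebra.
Set Implicit Arguments. Unset Strict Implicit. Unset Printing Implicit Defensive.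
Import Order.TTheory GRing.Theory.
Local Open Scope ring_scope.

Section CommAlg.
Variable R : comUnitRingType.

Definition is_ideal (I : R -> Prop) : Prop :=
  [/\ I 0, (forall x y, I x -> I y -> I (x + y)) & (forall a x, I x -> I (a * x))].

Definition fg_ideal (I : R -> Prop) : Prop :=
  exists s : seq R, forall x, I x <->
    exists c : seq R, size c = size s /\ x = \sum_(i < size s) c`_i * s`_i.

Definition noetherian : Prop := forall I, is_ideal I -> fg_ideal I.

(* local ring: the non-units form an ideal (the maximal ideal m) *)
Definition maxid (x : R) : Prop := x \isn't a GRing.unit.
Definition local_ring : Prop :=
  forall x y, maxid x -> maxid y -> maxid (x + y).

Definition maxid_pow (n : nat) (x : R) : Prop :=
  exists s : seq (n.-tuple R),
    (forall t, t \in s -> forall i, maxid (tnth t i)) /\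
    x = \sum_(t <- s) \prod_(i < n) tnth t i.

Definition ann_maxid_pow_not_sub (n : nat) : Prop :=
  exists x, (forall y, maxid_pow n y -> y * x = 0) /\ ~ maxid_pow n x.

Definition frobr_mx (p r : nat) (m n : nat) (A : 'M[R]_(m, n)) : 'M[R]_(m, n) :=
  map_mx (fun a => a ^+ (p ^ r)) A.

Variable M : lmodType R.

Definition fg_module : Prop :=
  exists n, exists f : {linear 'rV[R]_n -> M}, forall x, exists u, f u = x.

(* free module of finite rank (for f.g. modules over a local ring, this is
   equivalent to projective) *)
Definition free_module : Prop :=
  exists n, exists f : {linear 'rV[R]_n -> M}, bijective f.

(* A free resolution of M by finite free modules (row-vector convention):
   ... -> R^(n 2) --d 1--> R^(n 1) --d 0--> R^(n 0) --aug--> M -> 0 *)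
Record free_resolution := FreeRes {
  fr_rank : nat -> nat;
  fr_d : forall i, 'M[R]_(fr_rank i.+1, fr_rank i);
  fr_aug : {linear 'rV[R]_(fr_rank 0) -> M};
  fr_aug_surj : forall x, exists u, fr_aug u = x;
  fr_exact0 : forall u, fr_aug u = 0 <-> exists v, u = v *m fr_d 0;
  fr_exact : forall i (u : 'rV_(fr_rank i.+1)),
      u *m fr_d i = 0 <-> exists v, u = v *m fr_d i.+1
}.

(* Tor^R_{k+1}(M, ^{phi^r} R) = 0, computed from the free resolution F:
   F (x)_R ^{phi^r}R is the complex of the R^(n i) with differentials the
   matrices with entries raised to the power p^r; Tor_{k+1} is its homology
   at R^(n (k+1)). *)
Definition tor_frob_vanish_res (F : free_resolution) (p r k : nat) : Prop :=
  forall u : 'rV[R]_(fr_rank F k.+1),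
    u *m frobr_mx p r (fr_d F k) = 0 ->
    exists v : 'rV[R]_(fr_rank F k.+2), u = v *m frobr_mx p r (fr_d F k.+1).

(* Tor_j^R(M, ^{phi^r}R) = 0 for j >= 1 (Tor is independent of the chosen
   free resolution; we require vanishing for every finite free resolution). *)
Definition tor_frob_vanish (p r j : nat) : Prop :=
  forall F : free_resolution, tor_frob_vanish_res F p r j.-1.

End CommAlg.

From HB Require Import structures.
From mathcomp Require Import all_boot all_order all_algebra.
From Stdlib Require Import Classical IndefiniteDescription.
Set Implicit Arguments. Unset Strict Implicit. Unset Printing Implicit Defensive.
Import GRing.Theory.
Local Open Scope ring_scope.

(* Since R is Noetherian, M has a minimal free resolution F: all entries of
   its differentials lie in m.  Tensoring with ^{phi^r}R raises these entries
   to the power p^r >= p, so they land in m^p.  If F_j were nonzero, an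
   element x of (0 : m^p) outside m^p, placed in one coordinate of F_j, would
   be a cycle of F (x) ^{phi^r}R, hence a boundary, forcing x into m^p; so
   F_j = 0.  The same hypothesis yields a nonzero s with m s = 0, i.e.
   depth R = 0: placed in a coordinate of F_(i+1), s is a cycle of the
   minimal complex F, which cannot be a boundary once F_(i+2) = 0.
   Descending from F_j = 0 we get F_1 = 0, so M is isomorphic to F_0. *)

Section PowersOfMaxid.
Variable R : comUnitRingType.
Implicit Types (a b v x y : R) (n : nat).

Lemma maxidMl a b : maxid b -> maxid (a * b).
Proof. by move=> mb; rewrite /maxid unitrM negb_and mb orbT. Qed.

Lemma maxidX n a : (0 < n)%N -> maxid a -> maxid (a ^+ n).
Proof. by move=> n_gt0; rewrite /maxid unitrX_pos. Qed.

Lemma maxid_pow0 n : maxid_pow n (0 : R).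
Proof. by exists [::]; rewrite big_nil. Qed.

Lemma maxid_powD n x y : maxid_pow n x -> maxid_pow n y -> maxid_pow n (x + y).
Proof.
case=> [s [ms ->]] [t [mt ->]]; exists (s ++ t); split; last by rewrite big_cat.
by move=> u; rewrite mem_cat => /orP[/ms|/mt].
Qed.

Lemma maxid_pow_sum n (I : Type) (r : seq I) (P : pred I) (F : I -> R) :
  (forall i, P i -> maxid_pow n (F i)) -> maxid_pow n (\sum_(i <- r | P i) F i).
Proof. by move=> mF; apply: big_ind => //; [apply: maxid_pow0 | apply: maxid_powD]. Qed.

Lemma maxid_pow_exp0 : maxid_pow 0 (1 : R).
Proof. by exists [:: [tuple]]; split=> [t _ [] | ]; rewrite ?big_seq1 ?big_ord0. Qed.

Lemma maxid_powMS n a y : maxid a -> maxid_pow n y -> maxid_pow n.+1 (a * y).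
Proof.
move=> ma [s [ms ->]]; exists [seq cons_tuple a t | t <- s]; split.
  move=> _ /mapP[t st ->] i.
  by case: (unliftP ord0 i) => [j ->|->]; [rewrite tnthS; apply: ms | rewrite tnth0].
rewrite big_map mulr_sumr; apply: eq_bigr => t _.
by rewrite big_ord_recl tnth0; congr (_ * _); apply: eq_bigr => i _; rewrite tnthS.
Qed.

Lemma maxid_powX n a : maxid a -> maxid_pow n (a ^+ n).
Proof.
move=> ma; elim: n => [|n IHn]; first exact: maxid_pow_exp0.
by rewrite exprS; apply: maxid_powMS.
Qed.

Lemma maxid_pow_frob p r v a :
  (0 < p)%N -> (0 < r)%N -> maxid a -> maxid_pow p (v * a ^+ (p ^ r)).
Proof.
case: p => // p _; case: r => // r _ ma.
have mb : maxid (a ^+ (p.+1 ^ r)) by apply: maxidX ma; rewrite expn_gt0.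
rewrite expnSr exprM exprS mulrA.
by apply: maxid_powMS; [apply: maxidMl | apply: maxid_powX].
Qed.

Lemma socle_of_ann n x :
  x != 0 -> (forall y, maxid_pow n y -> y * x = 0) ->
  exists2 s : R, s != 0 & forall a, maxid a -> a * s = 0.
Proof.
elim: n x => [|n IHn] x x_neq0 x_ann.
  by rewrite -[x]mul1r (x_ann 1 maxid_pow_exp0) eqxx in x_neq0.
have [[a ma ax_neq0] | no_a] := classic (exists2 a, maxid a & a * x != 0).
  apply: (IHn (a * x)) => // y my; rewrite mulrA x_ann // mulrC.
  exact: maxid_powMS.
exists x => // a ma; apply/eqP/negPn/negP => ax_neq0.
by apply: no_a; exists a.
Qed.

Lemma socle_of_ann_maxid_pow_not_sub n :
  ann_maxid_pow_not_sub R n ->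
  exists2 s : R, s != 0 & forall a, maxid a -> a * s = 0.
Proof.
case=> x [x_ann x_notin]; apply: (socle_of_ann _ x_ann).
by apply/eqP => x0; apply: x_notin; rewrite x0; apply: maxid_pow0.
Qed.

End PowersOfMaxid.

Section Spans.
Variables (R : comUnitRingType) (V : lmodType R).

Definition submod (N : V -> Prop) :=
  [/\ N 0, forall x y, N x -> N y -> N (x + y) & forall a x, N x -> N (a *: x)].

Definition lcomb k (g : 'I_k -> V) (u : 'rV[R]_k) : V := \sum_i u 0 i *: g i.

Definition spans k (g : 'I_k -> V) (N : V -> Prop) :=
  forall x, N x <-> exists u, x = lcomb g u.

Definition minimal_map k (f : 'rV[R]_k -> V) :=
  forall u, f u = 0 -> forall i, maxid (u 0 i).

Lemma lcomb_is_semilinear k (g : 'I_k -> V) : semilinear (lcomb g).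
Proof.
split=> [a u | u w]; rewrite /lcomb.
  by rewrite scaler_sumr; apply: eq_bigr => i _; rewrite mxE scalerA.
by rewrite -big_split; apply: eq_bigr => i _; rewrite mxE scalerDl.
Qed.

Lemma submod_lcomb N k (g : 'I_k -> V) u :
  submod N -> (forall i, N (g i)) -> N (lcomb g u).
Proof. by case=> N0 ND NZ Ng; apply: (big_ind N) => // i _; apply: NZ. Qed.

Lemma spans_drop N k (g : 'I_k.+1 -> V) (e : 'rV_k.+1) i0 :
  spans g N -> lcomb g e = 0 -> e 0 i0 \is a GRing.unit -> spans (g \o lift i0) N.
Proof.
move=> gN ge0 e_unit x; rewrite gN /lcomb; split=> -[u ->].
  have g_i0 : g i0 = - ((e 0 i0)^-1 *: \sum_j e 0 (lift i0 j) *: g (lift i0 j)).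
    move: ge0; rewrite /lcomb (bigD1_ord i0) //= => /eqP; rewrite addr_eq0 => /eqP ge.
    by rewrite -[g i0]scale1r -(mulVr e_unit) -scalerA ge scalerN.
  exists (\row_j (u 0 (lift i0 j) - u 0 i0 * (e 0 i0)^-1 * e 0 (lift i0 j))).
  rewrite (bigD1_ord i0) //= g_i0 scalerN !scaler_sumr addrC.
  under [RHS]eq_bigr do rewrite mxE scalerBl -!scalerA.
  by rewrite sumrB.
exists (\row_i if unlift i0 i is Some j then u 0 j else 0).
rewrite (bigD1_ord i0) //= mxE unlift_none scale0r add0r.
by apply: eq_bigr => j _; rewrite mxE liftK.
Qed.

Lemma minimal_spanning_family N k (g : 'I_k -> V) :
  spans g N -> exists k' (g' : 'I_k' -> V), spans g' N /\ minimal_map (lcomb g').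
Proof.
elim: k g => [|k IHk] g gN; first by exists 0%N, g; split=> // u _ [].
have [[e [i0 [ge0 e_unit]]] | g_min] :=
  classic (exists e i0, lcomb g e = 0 /\ e 0 i0 \is a GRing.unit).
  exact: IHk (spans_drop gN ge0 e_unit).
exists k.+1, g; split=> // u gu0 i; apply/negP => u_unit.
by apply: g_min; exists u, i.
Qed.

End Spans.

HB.instance Definition _ (R : comUnitRingType) (V : lmodType R) k (g : 'I_k -> V) :=
  GRing.isSemilinear.Build R 'rV[R]_k V _ (lcomb g) (lcomb_is_semilinear g).

Section Generators.
Variable R : comUnitRingType.

Definition generates k n (G : 'M[R]_(k, n)) (N : 'rV[R]_n -> Prop) :=
  forall u, N u <-> exists v, u = v *m G.

Lemma submod_ker (U V : lmodType R) (f : {linear U -> V}) : submod (fun u => f u = 0).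
Proof.
split=> [|x y /= fx fy | a x /= fx]; first exact: raddf0.
  by rewrite linearD fx fy addr0.
by rewrite linearZZ fx scaler0.
Qed.

Lemma lcomb_row k n (G : 'M[R]_(k, n)) v : lcomb (fun i => row i G) v = v *m G.
Proof. by rewrite mulmx_sum_row. Qed.

Lemma mulmx_lcomb k n (g : 'I_k -> 'rV[R]_n) v : v *m \matrix_i g i = lcomb g v.
Proof. by rewrite mulmx_sum_row; under eq_bigr do rewrite rowK. Qed.

Lemma generates_row k n (G : 'M[R]_(k, n)) N i : generates G N -> N (row i G).
Proof. by move=> GN; apply/GN; exists (delta_mx 0 i); rewrite rowE. Qed.

Lemma submod_mulmx k n (G : 'M[R]_(k, n)) N v :
  submod N -> (forall i, N (row i G)) -> N (v *m G).
Proof. by rewrite -lcomb_row; apply: submod_lcomb. Qed.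

Lemma fg_ideal_gen (I : R -> Prop) s :
  (forall x, I x <-> exists c, size c = size s /\ x = \sum_(i < size s) c`_i * s`_i) ->
  forall i : 'I_(size s), I s`_i.
Proof.
move=> sI i; apply/sI; exists (mkseq (fun l => (l == i)%:R) (size s)).
rewrite size_mkseq (bigD1 i) //= nth_mkseq // eqxx mul1r big1 ?addr0 // => l li.
by rewrite nth_mkseq // val_eqE (negPf li) mul0r.
Qed.

Lemma generates_of_coord_ker (hn : noetherian R) n (N : 'rV[R]_n -> Prop) (i0 : 'I_n)
    k0 (G0 : 'M[R]_(k0, n)) :
  submod N -> generates G0 (fun u => N u /\ u 0 i0 = 0) ->
  exists k (G : 'M[R]_(k, n)), generates G N.
Proof.
move=> sN G0gen; case: (sN) => N0 ND NZ.
pose I a := exists2 u, N u & u 0 i0 = a.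
have I_ideal : is_ideal I.
  split; first by exists 0 => //; rewrite mxE.
    by move=> _ _ [u Nu <-] [w Nw <-]; exists (u + w); rewrite ?mxE //; apply: ND.
  by move=> a _ [u Nu <-]; exists (a *: u); rewrite ?mxE //; apply: NZ.
have [s sI] := hn I I_ideal.
have [u uP] : exists u : 'I_(size s) -> 'rV_n, forall i, N (u i) /\ u i 0 i0 = s`_i.
  apply: (functional_choice (fun (i : 'I_(size s)) (w : 'rV_n) => N w /\ w 0 i0 = s`_i)) => i.
  by have [w Nw wi] := fg_ideal_gen sI i; exists w.
pose U := \matrix_i u i.
have NU i : N (row i U) by rewrite rowK; case: (uP i).
exists (size s + k0)%N, (col_mx U G0) => x; split=> [Nx | [v ->]]; last first.
  rewrite -[v]hsubmxK mul_row_col; apply: ND; apply: submod_mulmx => // i.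
  by case/(generates_row i): G0gen.
have /sI[c [_ xi0]] : I (x 0 i0) by exists x.
pose cv := \row_(i < size s) c`_i.
have /G0gen[w yw] : N (x - cv *m U) /\ (x - cv *m U) 0 i0 = 0.
  split; first by apply: ND => //; rewrite -scaleN1r; apply: NZ; apply: submod_mulmx.
  rewrite !mxE xi0; apply/eqP; rewrite subr_eq0; apply/eqP/eq_bigr => i _.
  by rewrite !mxE (proj2 (uP i)).
by exists (row_mx cv w); rewrite mul_row_col -yw addrC subrK.
Qed.

Lemma noetherian_generates (hn : noetherian R) n (N : 'rV[R]_n -> Prop) :
  submod N -> exists k (G : 'M[R]_(k, n)), generates G N.
Proof.
suff gen_vanish m (N' : 'rV[R]_n -> Prop) : submod N' ->
    (forall u, N' u -> forall i : 'I_n, (m <= i)%N -> u 0 i = 0) ->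
    exists k (G : 'M[R]_(k, n)), generates G N'.
  by move=> sN; apply: (gen_vanish n) => // u _ i; rewrite leqNgt ltn_ord.
elim: m N' => [|m IHm] N' sN' vanish.
  exists 0%N, 0 => u; split=> [N'u | [v ->]]; last by rewrite mulmx0; case: sN'.
  by exists 0; rewrite mulmx0; apply/rowP => i; rewrite mxE vanish.
have [n_le_m | m_lt_n] := leqP n m.
  by apply: IHm => // u _ i; rewrite leqNgt (leq_trans (ltn_ord i) n_le_m).
pose i0 := Ordinal m_lt_n.
have [k0 [G0 G0gen]] :
    exists k0 (G0 : 'M[R]_(k0, n)), generates G0 (fun u => N' u /\ u 0 i0 = 0).
  case: (sN') => N0 ND NZ; apply: IHm.
    split=> [|x y [Nx x0] [Ny y0] | a x [Nx x0]].
    - by split; rewrite ?mxE.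
    - by split; [apply: ND | rewrite mxE x0 y0 addr0].
    - by split; [apply: NZ | rewrite mxE x0 mulr0].
  move=> u [N'u u0] i; rewrite leq_eqVlt => /orP[/eqP mi | ]; last exact: vanish.
  by rewrite (_ : i = i0) //; apply: val_inj.
exact: (generates_of_coord_ker (i0 := i0) hn sN' G0gen).
Qed.

Lemma minimal_generates (hn : noetherian R) n (N : 'rV[R]_n -> Prop) :
  submod N -> exists k (G : 'M[R]_(k, n)), generates G N /\ minimal_map (mulmxr G).
Proof.
move=> sN; have [k [G GN]] := noetherian_generates hn sN.
have /minimal_spanning_family[k' [g [gN g_min]]] : spans (fun i => row i G) N.
  by move=> u; rewrite GN; split=> -[v ->]; exists v; rewrite lcomb_row.
exists k', (\matrix_i g i); split=> [u | v /=]; last by rewrite mulmx_lcomb; apply: g_min.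
by rewrite gN; split=> -[v ->]; exists v; rewrite mulmx_lcomb.
Qed.

End Generators.

Section MinimalResolution.
Variables (R : comUnitRingType) (M : lmodType R).

Definition minimal_resolution (F : free_resolution M) :=
  forall i a b, maxid (fr_d F i a b).

Lemma minimal_map_entries (W : lmodType R) a c (f : 'rV[R]_a -> W) (E : 'M[R]_(c, a)) :
  minimal_map f -> generates E (fun u => f u = 0) -> forall i l, maxid (E i l).
Proof.
move=> f_min fE i l; have -> : E i l = row i E 0 l by rewrite mxE.
by apply: f_min; apply: generates_row fE.
Qed.

Lemma minimal_resolution_of_maps (F : free_resolution M) :
  minimal_map (fr_aug F) -> (forall i, minimal_map (mulmxr (fr_d F i))) ->
  minimal_resolution F.
Proof.
move=> aug_min d_min [|i]; apply: minimal_map_entries; first exact: aug_min.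
- exact: fr_exact0.
- exact: d_min.
- exact: fr_exact.
Qed.

Hypothesis hn : noetherian R.

Lemma syzygy_exists a b (D : 'M[R]_(a, b)) :
  {S : {c & 'M[R]_(c, a)} |
    generates (projT2 S) (fun u => u *m D = 0) /\ minimal_map (mulmxr (projT2 S))}.
Proof.
apply: constructive_indefinite_description.
have [c [E [EK E_min]]] := minimal_generates hn (submod_ker (mulmxr D)).
by exists (existT _ c E).
Qed.

Definition syzygy a b (D : 'M[R]_(a, b)) := sval (syzygy_exists D).

Variables (k1 k0 : nat) (E0 : 'M[R]_(k1, k0)).

(* Stage i packs (rank i, (rank i.+1, d i)); the next stage is the syzygy of d i. *)
Fixpoint syzygy_chain i : {b : nat & {a : nat & 'M[R]_(a, b)}} :=
  if i is i'.+1 then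
    let s := syzygy_chain i' in existT _ (projT1 (projT2 s)) (syzygy (projT2 (projT2 s)))
  else existT _ k0 (existT _ k1 E0).

Definition chain_rank i := projT1 (syzygy_chain i).

Definition chain_d i : 'M[R]_(chain_rank i.+1, chain_rank i) :=
  projT2 (projT2 (syzygy_chain i)).

Lemma chain_d_syzygy i :
  generates (chain_d i.+1) (fun u => u *m chain_d i = 0) /\
  minimal_map (mulmxr (chain_d i.+1)).
Proof. exact: svalP (syzygy_exists (chain_d i)). Qed.

Lemma chain_d_minimal i :
  minimal_map (mulmxr E0) -> minimal_map (mulmxr (chain_d i)).
Proof. by case: i => [|i] // _; case: (chain_d_syzygy i). Qed.

End MinimalResolution.

Lemma exists_minimal_resolution (R : comUnitRingType) (hn : noetherian R)
    (M : lmodType R) :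
  fg_module M -> exists F : free_resolution M, minimal_resolution F.
Proof.
case=> n [f f_surj].
have [k0 [g [gM g_min]]] :
    exists k0 (g : 'I_k0 -> M), spans g (fun _ => True) /\ minimal_map (lcomb g).
  apply: (minimal_spanning_family (g := fun i => f (delta_mx 0 i))) => x.
  split=> // _; have [u <-] := f_surj x; exists u.
  rewrite {1}(row_sum_delta u) linear_sum; apply: eq_bigr => i _; exact: linearZ.
have [k1 [E0 [E0K E0_min]]] := minimal_generates hn (submod_ker (lcomb g)).
have aug_surj x : exists u, lcomb g u = x by have [u ->] := proj1 (gM x) I; exists u.
pose F := @FreeRes R M (chain_rank hn E0) (chain_d hn E0) (lcomb g) aug_surj E0K
  (fun i => proj1 (chain_d_syzygy hn E0 i)).
exists F; apply: minimal_resolution_of_maps => // i.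
exact: chain_d_minimal.
Qed.

Section ResolutionRanks.
Variables (R : comUnitRingType) (M : lmodType R) (F : free_resolution M).

Lemma dim_eq0 n : ('I_n -> False) -> n = 0%N.
Proof. by case: n => // n /(_ ord0). Qed.

Lemma rV_dim0 n (v : 'rV[R]_n) : n = 0%N -> v = 0.
Proof. by move=> n0; subst n; apply: thinmx0. Qed.

Lemma scale_delta_mulmx a b x (e : 'I_a) (A : 'M[R]_(a, b)) :
  (x *: delta_mx 0 e : 'rV[R]_a) *m A = x *: row e A.
Proof. by rewrite -scalemxAl -rowE. Qed.

Lemma scale_delta_mx_diag n x (e : 'I_n) : (x *: delta_mx 0 e : 'rV[R]_n) 0 e = x.
Proof. by rewrite !mxE !eqxx mulr1. Qed.

Lemma free_of_rank1_eq0 : fr_rank F 1 = 0%N -> free_module M.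
Proof.
move=> rk1.
have aug_inj : injective (fr_aug F).
  move=> u w /eqP; rewrite -subr_eq0 -raddfB => /eqP /fr_exact0[v uw].
  by apply/eqP; rewrite -subr_eq0 uw (rV_dim0 v rk1) mul0mx.
have [h hK] := functional_choice _ (fr_aug_surj F).
by exists (fr_rank F 0), (fr_aug F), h => [u | x]; [apply: aug_inj; rewrite hK | apply: hK].
Qed.

Variables (s : R) (s_neq0 : s != 0) (s_ann : forall a, maxid a -> a * s = 0).
Hypothesis F_min : minimal_resolution F.

Lemma minimal_resolution_rank_pred i :
  fr_rank F i.+2 = 0%N -> fr_rank F i.+1 = 0%N.
Proof.
move=> rk2; apply: dim_eq0 => e.
have /fr_exact[v sev] : (s *: delta_mx 0 e : 'rV_(fr_rank F i.+1)) *m fr_d F i = 0.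
  by apply/rowP => c; rewrite scale_delta_mulmx !mxE mulrC s_ann ?F_min.
move/eqP: s_neq0; apply.
by rewrite -(scale_delta_mx_diag s e) sev (rV_dim0 v rk2) mul0mx mxE.
Qed.

Lemma minimal_resolution_rank1 k : fr_rank F k.+1 = 0%N -> fr_rank F 1 = 0%N.
Proof. by elim: k => // k IHk /minimal_resolution_rank_pred/IHk. Qed.

End ResolutionRanks.

Lemma tor_frob_vanish_rank (R : comUnitRingType) (M : lmodType R)
    (F : free_resolution M) p r k :
  (0 < p)%N -> (0 < r)%N -> ann_maxid_pow_not_sub R p -> minimal_resolution F ->
  tor_frob_vanish_res F p r k -> fr_rank F k.+1 = 0%N.
Proof.
move=> p_gt0 r_gt0 [x [x_ann x_notin]] F_min tor; apply: dim_eq0 => e.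
have /tor[v xev] : (x *: delta_mx 0 e : 'rV_(fr_rank F k.+1)) *m frobr_mx p r (fr_d F k) = 0.
  apply/rowP => c; rewrite scale_delta_mulmx !mxE mulrC -[_ ^+ _]mul1r.
  by apply: x_ann; apply: maxid_pow_frob; last exact: F_min.
apply: x_notin; rewrite -(scale_delta_mx_diag x e) xev mxE.
by apply: maxid_pow_sum => l _; rewrite mxE; apply: maxid_pow_frob; last exact: F_min.
Qed.

Theorem proposition1p1 (R : comUnitRingType) (p : nat)
  (hchar : p \in [pchar R]) (hnoeth : noetherian R) (hlocal : local_ring R)
  (hann : ann_maxid_pow_not_sub R p)
  (M : lmodType R) (hfg : fg_module M) (j r : nat) (hj : (1 <= j)%N) (hr : (1 <= r)%N)
  (htor : tor_frob_vanish M p r j) :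
  free_module M.
Proof.
have p_gt0 : (0 < p)%N := prime_gt0 (pcharf_prime hchar).
have [F F_min] := exists_minimal_resolution hnoeth hfg.
have [s s_neq0 s_ann] := socle_of_ann_maxid_pow_not_sub hann.
case: j hj htor => // j _ htor.
apply: (free_of_rank1_eq0 (F := F)).
apply: (minimal_resolution_rank1 s_neq0 s_ann F_min (k := j)).
exact: tor_frob_vanish_rank p_gt0 hr hann F_min (htor F).
Qed.
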